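(* Let $(\mathcal{K},[\cdot,\cdot])$ be a Krein space with fundamental symmetry $J$, and let $\{k_n\}_{n\in\mathbb{N}}$ be a sequence in $\mathcal{K}$. Let $0<A\leq B<\infty$. The following statements are equivalent: (i) $\{k_n\}_{n\in\mathbb{N}}$ is a frame for the Krein space $\mathcal{K}$ with frame bounds $A\leq B$; (ii) $\{Jk_n\}_{n\in\mathbb{N}}$ is a frame for the Krein space $\mathcal{K}$ with frame bounds $A\leq B$; (iii) $\{k_n\}_{n\in\mathbb{N}}$ is a frame for the Hilbert space $(\mathcal{K},[\cdot,\cdot]_J)$ with frame bounds $A\leq B$; (iv) $\{Jk_n\}_{n\in\mathbb{N}}$ is a frame for the Hilbert space $(\mathcal{K},[\cdot,\cdot]_J)$ with frame bounds $A\leq B$.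
   Context: A Krein space $(\mathcal{K},[\cdot,\cdot])$ has a fundamental decomposition $\mathcal{K}=\mathcal{K}_+\oplus\mathcal{K}_-$ and fundamental symmetry $J(k^++k^-)=k^+-k^-$ ($k^\pm\in\mathcal{K}_\pm$), such that $[h,k]_J:=[h,Jk]$ is a positive definite inner product making $(\mathcal{K},[\cdot,\cdot]_J)$ a Hilbert space; $\|k\|_J:=\sqrt{[k,k]_J}$. A countable sequence $\{k_n\}$ in a Krein space $\mathcal{K}$ is a frame for the Krein space $\mathcal{K}$ with frame bounds $0<A\leq B<\infty$ if $A\|k\|_J^2\leq\sum_n|[k_n,k]|^2\leq B\|k\|_J^2$ for all $k\in\mathcal{K}$. A frame for a Hilbert space $(\mathcal{H},\langle\cdot,\cdot\rangle)$ with frame bounds $A\le B$ is a sequence $\{f_n\}$ with $A\|f\|^2\leq\sum_n|\langle f_n,f\rangle|^2\leq B\|f\|^2$ for all $f\in\mathcal{H}$. *)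

From HB Require Import structures.
From mathcomp Require Import all_boot all_order all_algebra.
From mathcomp Require Import all_classical all_reals all_analysis.
From mathcomp Require Import complex.
Set Implicit Arguments. Unset Strict Implicit. Unset Printing Implicit Defensive.
Import Order.TTheory GRing.Theory Num.Theory.
Local Open Scope ring_scope.

Section Krein.
Variable R : realType.
Local Notation C := R[i].
Variable V : lmodType C.

Definition sesquilinear_hermitian (ip : V -> V -> C) : Prop :=
  (forall (a : C) (x y z : V), ip (a *: x + y) z = a * ip x z + ip y z) /\
  (forall x y : V, ip x y = (ip y x)^*).

Definition subspace (S : pred V) : Prop :=
  0 \in S /\ forall (a : C) (x y : V), x \in S -> y \in S -> a *: x + y \in S.

Definition ipJ (ip : V -> V -> C) (J : V -> V) : V -> V -> C :=
  fun h k => ip h (J k).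

Definition hnorm (ipf : V -> V -> C) (x : V) : R :=
  Num.sqrt (complex.Re (ipf x x)).

Definition complete_wrt (nrm : V -> R) : Prop :=
  forall u : nat -> V,
    (forall e : R, 0 < e -> exists N : nat, forall m n : nat,
        (N <= m)%N -> (N <= n)%N -> nrm (u m - u n) < e) ->
    exists x : V, forall e : R, 0 < e -> exists N : nat, forall n : nat,
        (N <= n)%N -> nrm (u n - x) < e.

Definition krein_space (ip : V -> V -> C) (Kp Km : pred V) (J : V -> V) : Prop :=
  [/\ sesquilinear_hermitian ip,
      subspace Kp /\ subspace Km,
      (forall k : V, exists kp km, [/\ kp \in Kp, km \in Km & k = kp + km]) /\
      (forall x : V, x \in Kp -> x \in Km -> x = 0),
      (forall x y : V, x \in Kp -> y \in Km -> ip x y = 0) /\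
      (forall kp km : V, kp \in Kp -> km \in Km -> J (kp + km) = kp - km)
    & (forall k : V, k != 0 -> 0 < ipJ ip J k k) /\
      complete_wrt (hnorm (ipJ ip J))].

Definition frame_ineq (ipf : V -> V -> C) (nrm : V -> R) (k : nat -> V) (A B : R)
  : Prop :=
  forall x : V,
    ((A * nrm x ^+ 2)%:E <=
       \sum_(0 <= n <oo) ((Normc.normc (ipf (k n) x)) ^+ 2)%:E <=
     (B * nrm x ^+ 2)%:E)%E.

Definition krein_frame ip J k A B := frame_ineq ip (hnorm (ipJ ip J)) k A B.

Definition hilbert_frame ip J k A B :=
  frame_ineq (ipJ ip J) (hnorm (ipJ ip J)) k A B.

End Krein.

(* J is an involution that is self-adjoint for [.,.], so it preserves the
   J-norm and [J a, b] = [a, b]_J, [J a, J b]_J = [a, b].  Hence the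
   coefficient sequence of each of the four families at k equals that of
   another family at k or at J k, and the frame inequalities transfer. *)
From HB Require Import structures.
From mathcomp Require Import all_boot all_order all_algebra.
From mathcomp Require Import all_classical all_reals all_analysis.
From mathcomp Require Import complex.
Import Order.TTheory GRing.Theory Num.Theory.
Local Open Scope ring_scope.

Section Sesquilinear.
Variables (R : realType) (V : lmodType R[i]) (ip : V -> V -> R[i]).
Hypothesis ip_sh : sesquilinear_hermitian ip.

Lemma ipDl x y z : ip (x + y) z = ip x z + ip y z.
Proof. by have := ip_sh.1 1 x y z; rewrite scale1r mul1r. Qed.

Lemma ip0l z : ip 0 z = 0.
Proof.
have e := ipDl 0 0 z; rewrite addr0 in e.
by apply: (addrI (ip 0 z)); rewrite addr0 -e.
Qed.

Lemma ipNl x z : ip (- x) z = - ip x z.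
Proof.
by have := ip_sh.1 (-1) x 0 z; rewrite addr0 ip0l addr0 scaleN1r mulN1r.
Qed.

Lemma ipDr x y z : ip z (x + y) = ip z x + ip z y.
Proof. by rewrite [LHS]ip_sh.2 [ip z x]ip_sh.2 [ip z y]ip_sh.2 ipDl rmorphD. Qed.

Lemma ipNr x z : ip z (- x) = - ip z x.
Proof. by rewrite [LHS]ip_sh.2 [ip z x]ip_sh.2 ipNl rmorphN. Qed.

End Sesquilinear.

Arguments ipDl {R V ip} ip_sh x y z.
Arguments ipNl {R V ip} ip_sh x z.
Arguments ipDr {R V ip} ip_sh x y z.
Arguments ipNr {R V ip} ip_sh x z.

Section FundamentalSymmetry.
Variables (R : realType) (V : lmodType R[i])
  (ip : V -> V -> R[i]) (Kp Km : pred V) (J : V -> V).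
Hypothesis HK : krein_space ip Kp Km J.

Lemma krein_decomp x :
  exists kp km, [/\ kp \in Kp, km \in Km, x = kp + km & J x = kp - km].
Proof.
case: HK => _ _ [decomp _] [_ J_decomp] _.
have [kp [km [kpP kmP ->]]] := decomp x.
by exists kp, km; split => //; rewrite J_decomp.
Qed.

Lemma krein_JK x : J (J x) = x.
Proof.
case: HK => _ [_ [Km0 Km_lin]] _ [_ J_decomp] _.
have [kp [km [kpP kmP -> ->]]] := krein_decomp x.
have NkmP : - km \in Km by have := Km_lin (-1) km 0 kmP Km0; rewrite addr0 scaleN1r.
by rewrite J_decomp // opprK.
Qed.

Lemma krein_J_adj a b : ip (J a) b = ip a (J b).
Proof.
case: HK => ip_sh _ _ [orth _] _.
have orth' x y : x \in Km -> y \in Kp -> ip x y = 0.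
  by move=> xP yP; rewrite ip_sh.2 orth // rmorph0.
have [ap [am [apP amP -> ->]]] := krein_decomp a.
have [bp [bm [bpP bmP -> ->]]] := krein_decomp b.
rewrite !(ipDl ip_sh, ipNl ip_sh, ipDr ip_sh, ipNr ip_sh).
by rewrite (orth ap bm) // (orth' am bp) // !(oppr0, addr0, add0r).
Qed.

Lemma krein_ipJ_Jl a b : ipJ ip J (J a) b = ip a b.
Proof. by rewrite /ipJ krein_J_adj krein_JK. Qed.

Lemma krein_hnormJ x : hnorm (ipJ ip J) (J x) = hnorm (ipJ ip J) x.
Proof. by rewrite /hnorm krein_ipJ_Jl. Qed.

End FundamentalSymmetry.

Arguments krein_JK {R V ip Kp Km J} HK x.
Arguments krein_J_adj {R V ip Kp Km J} HK a b.
Arguments krein_ipJ_Jl {R V ip Kp Km J} HK a b.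
Arguments krein_hnormJ {R V ip Kp Km J} HK x.

Lemma frame_ineq_transfer {R : realType} {V : lmodType R[i]}
    {f g : V -> V -> R[i]} {nrm : V -> R} {k k' : nat -> V} {A B : R} :
  frame_ineq f nrm k A B ->
  (forall x, exists y, nrm y = nrm x /\ forall n, g (k' n) x = f (k n) y) ->
  frame_ineq g nrm k' A B.
Proof.
move=> frame_f transfer x; have [y [nrm_y coef_y]] := transfer x.
have -> : (fun m => \sum_(0 <= n < m) ((Normc.normc (g (k' n) x)) ^+ 2)%:E)%E =
          (fun m => \sum_(0 <= n < m) ((Normc.normc (f (k n) y)) ^+ 2)%:E)%E.
  by apply: funext => m; apply: eq_bigr => n _; rewrite coef_y.
by rewrite -nrm_y; apply: frame_f.
Qed.

Theorem theorem3p3 (R : realType) (V : lmodType R[i])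
  (ip : V -> V -> R[i]) (Kp Km : pred V) (J : V -> V)
  (k : nat -> V) (A B : R) :
  krein_space ip Kp Km J -> 0 < A -> A <= B ->
  [<-> krein_frame ip J k A B;
       krein_frame ip J (fun n => J (k n)) A B;
       hilbert_frame ip J k A B;
       hilbert_frame ip J (fun n => J (k n)) A B].
Proof.
move=> HK _ _; rewrite /krein_frame /hilbert_frame.
tfae => frame; apply: (frame_ineq_transfer frame) => x.
- by exists (J x); split => [|n]; rewrite ?(krein_hnormJ HK) ?(krein_J_adj HK).
- by exists x; split => // n; rewrite (krein_J_adj HK).
- exists (J x); split => [|n]; first exact: (krein_hnormJ HK).
  by rewrite (krein_ipJ_Jl HK) /ipJ (krein_JK HK).
- by exists x; split => // n; rewrite (krein_ipJ_Jl HK).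
Qed.
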